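(* Let $f:\mathbb{R}^p\to\mathbb{R}$ be convex and twice continuously differentiable (not necessarily strictly convex), with the setting below. Let $I\subset(0,\infty)$ be an open interval such that for every $\rho\in I$ the function $\mathcal{E}_\rho$ has a unique minimizer $\mathbf{x}(\rho)$, the map $\rho\mapsto\mathbf{x}(\rho)$ is continuous on $I$, the index sets computed at $\mathbf{x}(\rho)$ do not depend on $\rho\in I$, and the rows of $\mathbf{U}_{\mathcal{Z}}$ are linearly independent. Let $\mathbf{Y}\in\mathbb{R}^{p\times(p-|\mathcal{Z}|)}$ be a matrix whose columns form a basis of the null space $\{\mathbf{y}:\mathbf{U}_{\mathcal{Z}}\mathbf{y}=\mathbf{0}\}$, where $|\mathcal{Z}|=|\mathcal{Z}_E|+|\mathcal{Z}_I|$, and assume $\mathbf{Y}^t d^2f(\mathbf{x}(\rho))\mathbf{Y}$ is nonsingular for every $\rho\in I$. Then $\rho\mapsto\mathbf{x}(\rho)$ is differentiable on $I$ and $$\frac{d\mathbf{x}(\rho)}{d\rho}=-\mathbf{Y}\,[\mathbf{Y}^t\mathbf{H}(\mathbf{x}(\rho))\mathbf{Y}]^{-1}\mathbf{Y}^t\mathbf{u}_{\bar{\mathcal{Z}}},$$ where $\mathbf{H}(\mathbf{x})=d^2f(\mathbf{x})$.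
   Context: Setting: $g_i(\mathbf{x})=\mathbf{v}_i^t\mathbf{x}-d_i$ ($1\le i\le r$), $h_j(\mathbf{x})=\mathbf{w}_j^t\mathbf{x}-e_j$ ($1\le j\le s$); $\mathcal{E}_\rho(\mathbf{x})=f(\mathbf{x})+\rho\sum_i|g_i(\mathbf{x})|+\rho\sum_j\max\{0,h_j(\mathbf{x})\}$. Index sets at $\mathbf{x}$: $\mathcal{N}_E=\{i:g_i(\mathbf{x})<0\}$, $\mathcal{Z}_E=\{i:g_i(\mathbf{x})=0\}$, $\mathcal{P}_E=\{i:g_i(\mathbf{x})>0\}$, $\mathcal{N}_I=\{j:h_j(\mathbf{x})<0\}$, $\mathcal{Z}_I=\{j:h_j(\mathbf{x})=0\}$, $\mathcal{P}_I=\{j:h_j(\mathbf{x})>0\}$. $\mathbf{U}_{\mathcal{Z}}$ is the matrix with rows $\mathbf{v}_i^t$ ($i\in\mathcal{Z}_E$) and $\mathbf{w}_j^t$ ($j\in\mathcal{Z}_I$); $\mathbf{u}_{\bar{\mathcal{Z}}}=-\sum_{i\in\mathcal{N}_E}\mathbf{v}_i+\sum_{i\in\mathcal{P}_E}\mathbf{v}_i+\sum_{j\in\mathcal{P}_I}\mathbf{w}_j$. *)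

From Stdlib Require Import Reals Lra.
From Stdlib Require Fin.
Open Scope R_scope.

Definition vec (n : nat) := Fin.t n -> R.

Fixpoint fsum (n : nat) : (Fin.t n -> R) -> R :=
  match n return (Fin.t n -> R) -> R with
  | O => fun _ => 0
  | S m => fun F => F Fin.F1 + fsum m (fun i => F (Fin.FS i))
  end.

Definition dot {n : nat} (u v : vec n) : R := fsum n (fun i => u i * v i).
Definition vnorm {n : nat} (u : vec n) : R := sqrt (dot u u).
Definition vadd {n : nat} (u v : vec n) : vec n := fun i => u i + v i.
Definition vsub {n : nat} (u v : vec n) : vec n := fun i => u i - v i.
Definition vscale {n : nat} (a : R) (u : vec n) : vec n := fun i => a * u i.

Definition convex {n : nat} (f : vec n -> R) : Prop :=
  forall (x y : vec n) (t : R), 0 <= t <= 1 ->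
    f (vadd (vscale t x) (vscale (1 - t) y)) <= t * f x + (1 - t) * f y.

Definition frechet_grad {n : nat} (F : vec n -> R) (g : vec n) (x : vec n) : Prop :=
  forall eps, 0 < eps -> exists delta, 0 < delta /\
    forall h : vec n, vnorm h < delta ->
      Rabs (F (vadd x h) - F x - dot g h) <= eps * vnorm h.

(* f is twice continuously differentiable on R^n, with gradient [grad] and
   Hessian [hess] : hess x i j = d/dx_j (d f / dx_i) (x). *)
Definition C2_with {n : nat} (f : vec n -> R) (grad : vec n -> vec n)
    (hess : vec n -> Fin.t n -> vec n) : Prop :=
  (forall x, frechet_grad f (grad x) x) /\
  (forall x i, frechet_grad (fun y => grad y i) (hess x i) x) /\
  (forall x i j eps, 0 < eps -> exists delta, 0 < delta /\
     forall y, vnorm (vsub y x) < delta -> Rabs (hess y i j - hess x i j) < eps).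

Definition is_open_interval (I : R -> Prop) : Prop :=
  (forall a b c, I a -> I c -> a <= b <= c -> I b) /\
  (forall a, I a -> exists delta, 0 < delta /\
     forall b, Rabs (b - a) < delta -> I b).

Definition gfun {p r : nat} (v : Fin.t r -> vec p) (d : vec r) (i : Fin.t r)
  (x : vec p) : R := dot (v i) x - d i.
Definition hfun {p s : nat} (w : Fin.t s -> vec p) (e : vec s) (j : Fin.t s)
  (x : vec p) : R := dot (w j) x - e j.

Definition Epen {p r s : nat} (f : vec p -> R) (v : Fin.t r -> vec p) (d : vec r)
  (w : Fin.t s -> vec p) (e : vec s) (rho : R) (x : vec p) : R :=
  f x + rho * fsum r (fun i => Rabs (gfun v d i x))
      + rho * fsum s (fun j => Rmax 0 (hfun w e j x)).

Definition is_minimizer {p : nat} (F : vec p -> R) (x : vec p) : Prop :=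
  forall y, F x <= F y.

Definition unique_minimizer {p : nat} (F : vec p -> R) (x : vec p) : Prop :=
  is_minimizer F x /\ forall y, is_minimizer F y -> forall l, y l = x l.

(* u_{bar Z}(x) = - sum_{N_E} v_i + sum_{P_E} v_i + sum_{P_I} w_j *)
Definition sgnE (a : R) : R :=
  if Rlt_dec a 0 then -1 else if Rlt_dec 0 a then 1 else 0.
Definition posI (a : R) : R := if Rlt_dec 0 a then 1 else 0.

Definition uZbar {p r s : nat} (v : Fin.t r -> vec p) (d : vec r)
  (w : Fin.t s -> vec p) (e : vec s) (x : vec p) : vec p :=
  fun l => fsum r (fun i => sgnE (gfun v d i x) * v i l)
         + fsum s (fun j => posI (hfun w e j x) * w j l).

Definition same_index_sets {p r s : nat} (v : Fin.t r -> vec p) (d : vec r)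
  (w : Fin.t s -> vec p) (e : vec s) (x y : vec p) : Prop :=
  (forall i, (gfun v d i x < 0 <-> gfun v d i y < 0) /\
             (gfun v d i x = 0 <-> gfun v d i y = 0) /\
             (0 < gfun v d i x <-> 0 < gfun v d i y)) /\
  (forall j, (hfun w e j x < 0 <-> hfun w e j y < 0) /\
             (hfun w e j x = 0 <-> hfun w e j y = 0) /\
             (0 < hfun w e j x <-> 0 < hfun w e j y)).

(* The rows of U_Z (v_i, i in Z_E, and w_j, j in Z_I, at x) are linearly independent *)
Definition UZ_rows_indep {p r s : nat} (v : Fin.t r -> vec p) (d : vec r)
  (w : Fin.t s -> vec p) (e : vec s) (x : vec p) : Prop :=
  forall (a : vec r) (b : vec s),
    (forall i, gfun v d i x <> 0 -> a i = 0) ->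
    (forall j, hfun w e j x <> 0 -> b j = 0) ->
    (forall l, fsum r (fun i => a i * v i l) + fsum s (fun j => b j * w j l) = 0) ->
    (forall i, a i = 0) /\ (forall j, b j = 0).

Definition in_null_UZ {p r s : nat} (v : Fin.t r -> vec p) (d : vec r)
  (w : Fin.t s -> vec p) (e : vec s) (x : vec p) (y : vec p) : Prop :=
  (forall i, gfun v d i x = 0 -> dot (v i) y = 0) /\
  (forall j, hfun w e j x = 0 -> dot (w j) y = 0).

(* Matrix Y (p x k) given by its columns Y c; product Y a *)
Definition mat_col_comb {p k : nat} (Y : Fin.t k -> vec p) (a : vec k) : vec p :=
  fun l => fsum k (fun c => a c * Y c l).

Definition null_basis {p r s k : nat} (v : Fin.t r -> vec p) (d : vec r)
  (w : Fin.t s -> vec p) (e : vec s) (x : vec p) (Y : Fin.t k -> vec p) : Prop :=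
  (forall c, in_null_UZ v d w e x (Y c)) /\
  (forall a : vec k, (forall l, mat_col_comb Y a l = 0) -> forall c, a c = 0) /\
  (forall y, in_null_UZ v d w e x y ->
     exists a : vec k, forall l, y l = mat_col_comb Y a l).

Definition reduced_hess {p k : nat} (H : Fin.t p -> vec p) (Y : Fin.t k -> vec p)
  : Fin.t k -> vec k :=
  fun c c' => fsum p (fun l => Y c l * fsum p (fun m => H l m * Y c' m)).

Definition mat_vec {k : nat} (M : Fin.t k -> vec k) (z : vec k) : vec k :=
  fun c => fsum k (fun c' => M c c' * z c').

Definition nonsingular {k : nat} (M : Fin.t k -> vec k) : Prop :=
  forall z : vec k, (forall c, mat_vec M z c = 0) -> forall c, z c = 0.

Definition mat_tr_vec {p k : nat} (Y : Fin.t k -> vec p) (u : vec p) : vec k :=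
  fun c => dot (Y c) u.

From Stdlib Require Import Reals.
Open Scope R_scope.
From Stdlib Require Import Lra FunctionalExtensionality.
From mathcomp Require Import ssreflect ssrfun ssrbool eqtype ssrnat fintype bigop.
From mathcomp Require Import ssralg zmodp matrix Rstruct.

(* Fix rho0 in I and write x0 = x(rho0), u = u_Zbar(x0), H = d^2 f(x0),
   M = Y^t H Y and b = Y^t u.  Since the index sets are constant on I, the
   penalty terms are affine along every direction y of the null space of U_Z,
   so Fermat's rule gives the first-order condition
       grad f(x(rho)) . y + rho (u . y) = 0    for y in that null space.
   The increment D = x(rho0+h) - x0 lies in the null space, hence D = Y a;
   subtracting the first-order conditions at rho0+h and rho0 and expanding
   grad f to first order around x0 yields  M a = -h b - Y^t r  with a
   gradient remainder r = o(|D|).  Inverting M gives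
       D + h Y M^-1 b = - Y M^-1 Y^t r,
   whose l1-norm is at most a small multiple of |D|; absorbing this into the
   left side shows D + h Y M^-1 b = o(h), which is the claimed derivative. *)

Lemma fsum_ext n (F G : Fin.t n -> R) : (forall i, F i = G i) -> fsum n F = fsum n G.
Proof.
induction n; simpl; intros H; [reflexivity|].
rewrite H (IHn _ _ (fun i => H (Fin.FS i))). reflexivity.
Qed.

Lemma fsum_plus n (F G : Fin.t n -> R) : fsum n (fun i => F i + G i) = fsum n F + fsum n G.
Proof. induction n; simpl; [lra|]. rewrite IHn. lra. Qed.

Lemma fsum_minus n (F G : Fin.t n -> R) : fsum n (fun i => F i - G i) = fsum n F - fsum n G.
Proof. induction n; simpl; [lra|]. rewrite IHn. lra. Qed.

Lemma fsum_scal n c (F : Fin.t n -> R) : fsum n (fun i => c * F i) = c * fsum n F.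
Proof. induction n; simpl; [lra|]. rewrite IHn. lra. Qed.

Lemma fsum_scal_r n c (F : Fin.t n -> R) : fsum n F * c = fsum n (fun i => F i * c).
Proof. rewrite Rmult_comm -fsum_scal. apply fsum_ext => i. ring. Qed.

Lemma fsum_const n c : fsum n (fun _ => c) = INR n * c.
Proof. induction n; simpl fsum; [simpl; lra|]. rewrite IHn S_INR. lra. Qed.

Lemma fsum_swap n m (F : Fin.t n -> Fin.t m -> R) :
  fsum n (fun i => fsum m (fun j => F i j)) = fsum m (fun j => fsum n (fun i => F i j)).
Proof.
induction n; simpl.
- rewrite fsum_const. lra.
- rewrite IHn -fsum_plus. reflexivity.
Qed.

Lemma fsum_le n (F G : Fin.t n -> R) : (forall i, F i <= G i) -> fsum n F <= fsum n G.
Proof.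
induction n; simpl; intros H; [lra|].
have := IHn (fun i => F (Fin.FS i)) (fun i => G (Fin.FS i)) (fun i => H (Fin.FS i)).
have := H Fin.F1. lra.
Qed.

Lemma fsum_nonneg n (F : Fin.t n -> R) : (forall i, 0 <= F i) -> 0 <= fsum n F.
Proof.
intros H. apply Rle_trans with (fsum n (fun _ => 0)); [|by apply fsum_le].
rewrite fsum_const. lra.
Qed.

Lemma fsum_abs n (F : Fin.t n -> R) : Rabs (fsum n F) <= fsum n (fun i => Rabs (F i)).
Proof.
induction n; simpl; [rewrite Rabs_R0; lra|].
eapply Rle_trans; [apply Rabs_triang|]. have := IHn (fun i => F (Fin.FS i)). lra.
Qed.

Lemma fsum_term n (F : Fin.t n -> R) i : (forall i, 0 <= F i) -> F i <= fsum n F.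
Proof.
induction n; intros H; [inversion i|].
apply (Fin.caseS' i); simpl.
- have := fsum_nonneg _ (fun j => F (Fin.FS j)) (fun j => H (Fin.FS j)). lra.
- intros q. have := IHn (fun j => F (Fin.FS j)) q (fun j => H (Fin.FS j)).
  have := H Fin.F1. lra.
Qed.

Lemma fsum_sq_le n (F : Fin.t n -> R) :
  fsum n (fun i => F i * F i) <= (fsum n (fun i => Rabs (F i)))^2.
Proof.
induction n; simpl; [lra|].
have := IHn (fun i => F (Fin.FS i)).
have := fsum_nonneg _ (fun i => Rabs (F (Fin.FS i))) (fun i => Rabs_pos _).
have := Rabs_pos (F Fin.F1).
have : F Fin.F1 * F Fin.F1 = Rabs (F Fin.F1) * Rabs (F Fin.F1).
{ rewrite -Rabs_mult Rabs_right //. apply Rle_ge, Rle_0_sqr. }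
nra.
Qed.

Lemma dot_comm n (a b : vec n) : dot a b = dot b a.
Proof. unfold dot. apply fsum_ext => i. ring. Qed.

Lemma dot_add_r n (u a b : vec n) : dot u (vadd a b) = dot u a + dot u b.
Proof. unfold dot, vadd. rewrite -fsum_plus. apply fsum_ext => i. ring. Qed.

Lemma dot_sub_r n (u a b : vec n) : dot u (vsub a b) = dot u a - dot u b.
Proof. unfold dot, vsub. rewrite -fsum_minus. apply fsum_ext => i. ring. Qed.

Lemma dot_scale_r n (u a : vec n) t : dot u (vscale t a) = t * dot u a.
Proof. unfold dot, vscale. rewrite -fsum_scal. apply fsum_ext => i. ring. Qed.

Lemma dot_affine_r n (u a b : vec n) t :
  dot u (fun i => t * a i - b i) = t * dot u a - dot u b.
Proof. unfold dot. rewrite -fsum_scal -fsum_minus. apply fsum_ext => i. ring. Qed.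

Lemma dot_nonneg n (z : vec n) : 0 <= dot z z.
Proof. apply fsum_nonneg => i. apply Rle_0_sqr. Qed.

Lemma vnorm_scale n t (y : vec n) : vnorm (vscale t y) = Rabs t * vnorm y.
Proof.
unfold vnorm, dot, vscale.
rewrite (fsum_ext _ _ (fun i => (t * t) * (y i * y i))); [|intros; ring].
rewrite fsum_scal sqrt_mult; [|apply Rle_0_sqr|apply dot_nonneg].
change (t * t) with (Rsqr t). rewrite sqrt_Rsqr_abs. reflexivity.
Qed.

(* The l1-norm, which is easier to bound coordinatewise than the Euclidean
   norm [vnorm] while dominating it. *)

Definition n1 {n} (z : vec n) : R := fsum n (fun i => Rabs (z i)).

Lemma n1_nonneg n (z : vec n) : 0 <= n1 z.
Proof. apply fsum_nonneg => i. apply Rabs_pos. Qed.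

Lemma n1_coord n (z : vec n) i : Rabs (z i) <= n1 z.
Proof. apply (fsum_term _ (fun i => Rabs (z i))) => j. apply Rabs_pos. Qed.

Lemma vnorm_le_n1 n (z : vec n) : vnorm z <= n1 z.
Proof.
unfold vnorm. rewrite -(sqrt_pow2 (n1 z)); [|apply n1_nonneg].
apply sqrt_le_1_alt. apply fsum_sq_le.
Qed.

Lemma n1_le_shift n (D w : vec n) h :
  n1 D <= n1 (vadd D (vscale h w)) + Rabs h * n1 w.
Proof.
unfold n1. rewrite -fsum_scal -fsum_plus. apply fsum_le => l.
unfold vadd, vscale. rewrite -Rabs_mult.
replace (D l) with ((D l + h * w l) + - (h * w l)) at 1 by ring.
eapply Rle_trans; [apply Rabs_triang|]. rewrite Rabs_Ropp. lra.
Qed.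

Definition opnorm1 {m n} (A : Fin.t m -> vec n) : R := fsum m (fun i => n1 (A i)).

Lemma opnorm1_nonneg m n (A : Fin.t m -> vec n) : 0 <= opnorm1 A.
Proof. apply fsum_nonneg => i. apply n1_nonneg. Qed.

Lemma n1_rows_le m n (A : Fin.t m -> vec n) (q : vec n) :
  n1 (fun i => dot (A i) q) <= opnorm1 A * n1 q.
Proof.
unfold n1 at 1, opnorm1. rewrite fsum_scal_r. apply fsum_le => i.
eapply Rle_trans; [apply fsum_abs|].
apply Rle_trans with (fsum n (fun j => n1 q * Rabs (A i j))).
- apply fsum_le => j. rewrite Rabs_mult.
  have := n1_coord _ q j. have := Rabs_pos (A i j). nra.
- rewrite fsum_scal /n1. lra.
Qed.

Lemma fin_delta (A : Type) (m : A -> R) n (Q : Fin.t n -> A -> Prop) :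
  (forall i, exists δ, 0 < δ /\ forall a, m a < δ -> Q i a) ->
  exists δ, 0 < δ /\ forall a, m a < δ -> forall i, Q i a.
Proof.
induction n; intros H.
- exists 1. split; [lra|]. intros a _ i. inversion i.
- destruct (IHn (fun i => Q (Fin.FS i)) (fun i => H (Fin.FS i))) as [d1 [Hd1 H1]].
  destruct (H Fin.F1) as [d0 [Hd0 H0]].
  exists (Rmin d0 d1). split; [apply Rmin_pos; lra|].
  intros a Ha i. apply (Fin.caseS' i).
  + apply H0. eapply Rlt_le_trans; [exact Ha|apply Rmin_l].
  + intros q. apply (H1 a). eapply Rlt_le_trans; [exact Ha|apply Rmin_r].
Qed.

Lemma path_n1_continuity p (x : R -> vec p) t0 :
  (forall l, continuity_pt (fun t => x t l) t0) ->
  forall eps, 0 < eps ->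
    exists δ, 0 < δ /\ forall h, Rabs h < δ -> n1 (vsub (x (t0 + h)) (x t0)) < eps.
Proof.
intros Hc eps Heps.
set e := eps / (INR p + 1).
have Hp := pos_INR p.
have He : 0 < e by apply Rdiv_lt_0_compat; lra.
destruct (fin_delta R Rabs p (fun l h => Rabs (x (t0 + h) l - x t0 l) < e))
  as [δ [Hδ Hb]].
{ intros l. destruct (Hc l e He) as [α [Hα Hf]]. exists α. split; [exact Hα|].
  intros h Hh. destruct (Req_dec h 0) as [E|E].
  - rewrite E Rplus_0_r Rminus_diag Rabs_R0. exact He.
  - apply (Hf (t0 + h)). split.
    + split; [exact I|]. intro Q. apply E. lra.
    + simpl. unfold R_dist. replace (t0 + h - t0) with h by ring. exact Hh. }
exists δ. split; [exact Hδ|]. intros h Hh.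
apply Rle_lt_trans with (INR p * e).
- rewrite -fsum_const. apply fsum_le => l. apply Rlt_le. exact (Hb h Hh l).
- have Ee : e * (INR p + 1) = eps by unfold e; field; lra.
  nra.
Qed.

Lemma derivable_of_expansion p (x : R -> vec p) t0 (w : vec p) :
  (forall eta, 0 < eta -> exists δ, 0 < δ /\ forall h, Rabs h < δ ->
     n1 (vadd (vsub (x (t0 + h)) (x t0)) (vscale h w)) <= eta * Rabs h) ->
  forall l, derivable_pt_lim (fun t => x t l) t0 (- w l).
Proof.
intros Hexp l eps Heps.
destruct (Hexp (eps / 2)) as [δ [Hδ Hb]]; [lra|].
exists (mkposreal δ Hδ). intros h Hh0 Hh. simpl in Hh.
have Hha : 0 < Rabs h by apply Rabs_pos_lt.
have Hl := Rle_trans _ _ _ (n1_coord _ _ l) (Hb h Hh).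
unfold vadd, vsub, vscale in Hl.
replace ((x (t0 + h) l - x t0 l) / h - - w l)
  with ((x (t0 + h) l - x t0 l + h * w l) / h) by (field; exact Hh0).
unfold Rdiv. rewrite Rabs_mult Rabs_inv.
apply Rle_lt_trans with (eps / 2); [|lra].
apply (Rmult_le_reg_r (Rabs h)); [exact Hha|].
rewrite Rmult_assoc Rinv_l; lra.
Qed.

(* Nonsingular square matrices (in the sense of a trivial kernel) have a
   two-sided inverse; this is obtained from MathComp's matrix algebra
   through the bijection between Fin.t n and 'I_n. *)
Module FinMatrix.
Import GRing.Theory.
Local Open Scope ring_scope.

Definition o2f {n} (i : 'I_n) : Fin.t n := Fin.of_nat_lt (elimT ltP (ltn_ord i)).
Definition f2o {n} (c : Fin.t n) : 'I_n :=
  Ordinal (introT ltP (proj2_sig (Fin.to_nat c))).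

Lemma o2f_f2o n (c : Fin.t n) : o2f (f2o c) = c.
Proof.
rewrite /o2f /f2o /=.
transitivity (Fin.of_nat_lt (proj2_sig (Fin.to_nat c))).
  apply: Fin.of_nat_ext. apply: Fin.of_nat_to_nat_inv.
Qed.

Lemma f2o_o2f n (i : 'I_n) : f2o (o2f i) = i.
Proof. apply: val_inj => /=. by rewrite /o2f Fin.to_nat_of_nat. Qed.

Lemma fsum_big n (F : Fin.t n -> R) : fsum n F = \sum_(i < n) F (o2f i).
Proof.
elim: n F => [|n IH] F; first by rewrite big_ord0.
rewrite big_ord_recl /= IH. congr (_ + _). apply: eq_bigr => i _.
congr F. rewrite /o2f /=. congr Fin.FS. apply: Fin.of_nat_ext.
Qed.

Definition colv {n} (z : vec n) : 'cV[R]_n := \col_i z (o2f i).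
Definition mx_of {n} (M : Fin.t n -> vec n) : 'M[R]_n := \matrix_(i, j) M (o2f i) (o2f j).

Lemma mat_vec_mx n (M : Fin.t n -> vec n) z c :
  mat_vec M z c = (mx_of M *m colv z) (f2o c) 0.
Proof.
rewrite /mat_vec fsum_big !mxE. apply: eq_bigr => i _. by rewrite !mxE o2f_f2o.
Qed.

Lemma colv_mat_vec n (M : Fin.t n -> vec n) z : colv (mat_vec M z) = mx_of M *m colv z.
Proof. apply/matrixP => i j. by rewrite (ord1 j) mxE mat_vec_mx f2o_o2f. Qed.

Lemma nonsingular_unitmx n (M : Fin.t n -> vec n) : nonsingular M -> mx_of M \in unitmx.
Proof.
move=> Hns. rewrite unitmxE unitfE -det_tr. apply/negP => /det0P [y y_neq0 Hy].
pose z : vec n := fun c => y 0 (f2o c).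
have Hcz : colv z = y^T by apply/matrixP => i j; rewrite !mxE /z f2o_o2f (ord1 j).
have Hz : forall c, mat_vec M z c = 0.
  by move=> c; rewrite mat_vec_mx Hcz -[mx_of M]trmxK -trmx_mul Hy !mxE.
apply/negP: y_neq0. rewrite negbK. apply/eqP/matrixP => i j.
rewrite (ord1 i) mxE. have := Hns z Hz (o2f j). by rewrite /z f2o_o2f.
Qed.

Lemma mat_inv n (M : Fin.t n -> vec n) : nonsingular M ->
  exists N : Fin.t n -> vec n,
    (forall b c, mat_vec M (mat_vec N b) c = b c) /\
    (forall z c, mat_vec N (mat_vec M z) c = z c).
Proof.
move=> /nonsingular_unitmx HU.
exists (fun c c' => invmx (mx_of M) (f2o c) (f2o c')).
have HN : mx_of (fun c c' => invmx (mx_of M) (f2o c) (f2o c')) = invmx (mx_of M).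
  by apply/matrixP => i j; rewrite mxE !f2o_o2f.
split=> [b|z] c; rewrite mat_vec_mx colv_mat_vec HN mulmxA.
- by rewrite mulmxV // mul1mx mxE o2f_f2o.
- by rewrite mulVmx // mul1mx mxE o2f_f2o.
Qed.
End FinMatrix.

Lemma reduced_hess_mul p k (H : Fin.t p -> vec p) (Y : Fin.t k -> vec p) a c :
  mat_vec (reduced_hess H Y) a c = mat_tr_vec Y (mat_vec H (mat_col_comb Y a)) c.
Proof.
unfold mat_tr_vec, mat_vec, reduced_hess, dot, mat_col_comb.
rewrite (fsum_ext _ _ (fun c' => fsum p (fun l => fsum p (fun m => Y c l * H l m * Y c' m * a c')))).
2:{ intros c'. rewrite fsum_scal_r. apply fsum_ext => l. rewrite -fsum_scal fsum_scal_r.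
    apply fsum_ext => m. ring. }
rewrite fsum_swap. apply fsum_ext => l. rewrite fsum_swap -fsum_scal. apply fsum_ext => m.
rewrite -fsum_scal -fsum_scal. apply fsum_ext => c'. ring.
Qed.

Lemma mat_col_comb_rows p k (Y : Fin.t k -> vec p) a l :
  mat_col_comb Y a l = dot (fun c => Y c l) a.
Proof. apply dot_comm. Qed.

Lemma n1_mat_col_comb_le p k (Y : Fin.t k -> vec p) a :
  n1 (mat_col_comb Y a) <= opnorm1 (fun l c => Y c l) * n1 a.
Proof.
eapply Rle_trans; [|apply n1_rows_le].
right. apply fsum_ext => l. by rewrite mat_col_comb_rows.
Qed.

Lemma abs_pos_affine_near (g a : R) : (g = 0 -> a = 0) ->
  exists δ, 0 < δ /\ forall t, Rabs t < δ ->
    Rabs (g + t * a) = Rabs g + t * (sgnE g * a) /\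
    Rmax 0 (g + t * a) = Rmax 0 g + t * (posI g * a).
Proof.
intros Hga.
have Hapos : 0 < Rabs a + 1 by have := Rabs_pos a; lra.
destruct (Req_dec g 0) as [Hg|Hg].
- exists 1. split; [lra|]. intros t _. rewrite (Hga Hg) Hg.
  unfold sgnE, posI. destruct (Rlt_dec 0 0); [lra|]. destruct (Rlt_dec 0 0); [lra|].
  replace (0 + t * 0) with 0 by ring. split; ring.
- exists (Rabs g / (Rabs a + 1)). split.
  + apply Rdiv_lt_0_compat; [apply Rabs_pos_lt; exact Hg|exact Hapos].
  + intros t Ht.
    have Hb : Rabs t * (Rabs a + 1) < Rabs g.
    { apply (Rmult_lt_compat_r (Rabs a + 1)) in Ht; [|exact Hapos].
      unfold Rdiv in Ht. rewrite Rmult_assoc Rinv_l in Ht; lra. }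
    have Hta : Rabs (t * a) <= Rabs t * Rabs a by rewrite Rabs_mult; lra.
    have := Rabs_pos t. have := Rle_abs (t * a). have := Rle_abs (- (t * a)).
    rewrite Rabs_Ropp. intros H1 H2 H3.
    unfold sgnE, posI. destruct (Rlt_dec g 0) as [Hl|Hl].
    * have Hn : g + t * a < 0.
      { rewrite (Rabs_left g Hl) Rmult_plus_distr_l in Hb. lra. }
      destruct (Rlt_dec 0 g); [lra|].
      rewrite (Rabs_left _ Hn) (Rabs_left _ Hl) (Rmax_left 0 (g + t * a)); [|lra].
      rewrite Rmax_left; [|lra]. split; ring.
    * have Hp : 0 < g by lra.
      destruct (Rlt_dec 0 g); [|lra].
      have Hn : 0 < g + t * a.
      { rewrite (Rabs_right g) in Hb; [|lra]. rewrite Rmult_plus_distr_l in Hb. lra. }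
      rewrite (Rabs_right _ (Rle_ge _ _ (Rlt_le _ _ Hn))) (Rabs_right g); [|lra].
      rewrite (Rmax_right 0 (g + t * a)); [|lra]. rewrite Rmax_right; [|lra]. split; ring.
Qed.

Lemma dot_uZbar p r s (v : Fin.t r -> vec p) d (w : Fin.t s -> vec p) e xs y :
  dot (uZbar v d w e xs) y =
  fsum r (fun i => sgnE (gfun v d i xs) * dot (v i) y) +
  fsum s (fun j => posI (hfun w e j xs) * dot (w j) y).
Proof.
unfold dot, uZbar.
rewrite (fsum_ext _ _ (fun l => fsum r (fun i => sgnE (gfun v d i xs) * (v i l * y l))
   + fsum s (fun j => posI (hfun w e j xs) * (w j l * y l)))).
- rewrite fsum_plus (fsum_swap p r) (fsum_swap p s).
  f_equal; apply fsum_ext => i; by rewrite fsum_scal.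
- intros l. rewrite Rmult_plus_distr_r !fsum_scal_r. f_equal; apply fsum_ext => i; ring.
Qed.

Lemma gfun_line p r (v : Fin.t r -> vec p) d i xs t y :
  gfun v d i (vadd xs (vscale t y)) = gfun v d i xs + t * dot (v i) y.
Proof. unfold gfun. rewrite dot_add_r dot_scale_r. ring. Qed.

Lemma hfun_line p s (w : Fin.t s -> vec p) e j xs t y :
  hfun w e j (vadd xs (vscale t y)) = hfun w e j xs + t * dot (w j) y.
Proof. unfold hfun. rewrite dot_add_r dot_scale_r. ring. Qed.

Lemma penalty_affine_near p r s (v : Fin.t r -> vec p) d (w : Fin.t s -> vec p) e
  f rho xs y : in_null_UZ v d w e xs y ->
  exists δ, 0 < δ /\ forall t, Rabs t < δ ->
    Epen f v d w e rho (vadd xs (vscale t y)) =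
    f (vadd xs (vscale t y)) + (Epen f v d w e rho xs - f xs)
    + rho * dot (uZbar v d w e xs) y * t.
Proof.
intros [Hyg Hyh].
destruct (fin_delta R Rabs r (fun i t => Rabs (gfun v d i xs + t * dot (v i) y) =
   Rabs (gfun v d i xs) + t * (sgnE (gfun v d i xs) * dot (v i) y))) as [d1 [Hd1 H1]].
{ intros i. destruct (abs_pos_affine_near _ _ (Hyg i)) as [δ [Hδ H]].
  exists δ. split; [exact Hδ|]. intros t Ht. apply (H t Ht). }
destruct (fin_delta R Rabs s (fun j t => Rmax 0 (hfun w e j xs + t * dot (w j) y) =
   Rmax 0 (hfun w e j xs) + t * (posI (hfun w e j xs) * dot (w j) y))) as [d2 [Hd2 H2]].
{ intros j. destruct (abs_pos_affine_near _ _ (Hyh j)) as [δ [Hδ H]].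
  exists δ. split; [exact Hδ|]. intros t Ht. apply (H t Ht). }
exists (Rmin d1 d2). split; [apply Rmin_pos; lra|]. intros t Ht.
unfold Epen. rewrite dot_uZbar.
rewrite (fsum_ext _ (fun i => Rabs (gfun v d i (vadd xs (vscale t y))))
   (fun i => Rabs (gfun v d i xs) + t * (sgnE (gfun v d i xs) * dot (v i) y))).
2:{ intros i. rewrite gfun_line. apply H1. eapply Rlt_le_trans; [exact Ht|apply Rmin_l]. }
rewrite (fsum_ext _ (fun j => Rmax 0 (hfun w e j (vadd xs (vscale t y))))
   (fun j => Rmax 0 (hfun w e j xs) + t * (posI (hfun w e j xs) * dot (w j) y))).
2:{ intros j. rewrite hfun_line. apply H2. eapply Rlt_le_trans; [exact Ht|apply Rmin_r]. }
rewrite !fsum_plus !fsum_scal. ring.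
Qed.

Lemma vadd_vscale_0 n (x0 y : vec n) : vadd x0 (vscale 0 y) = x0.
Proof. apply functional_extensionality => l. unfold vadd, vscale. ring. Qed.

Lemma frechet_line_derivative n (F : vec n -> R) g x0 y :
  frechet_grad F g x0 ->
  derivable_pt_lim (fun t => F (vadd x0 (vscale t y))) 0 (dot g y).
Proof.
intros HF eps Heps.
set V := vnorm y. have HV : 0 <= V by apply sqrt_pos.
set c := eps / (2 * (V + 1)).
have Hc : 0 < c by apply Rdiv_lt_0_compat; lra.
have Ec : c * (2 * (V + 1)) = eps by unfold c; field; lra.
destruct (HF c Hc) as [δ [Hδ Hb]].
have Hd : 0 < δ / (V + 1) by apply Rdiv_lt_0_compat; lra.
exists (mkposreal _ Hd). intros h Hh0 Hh. simpl in Hh.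
have Hha : 0 < Rabs h by apply Rabs_pos_lt.
have HhV : Rabs h * (V + 1) < δ.
{ apply (Rmult_lt_compat_r (V + 1)) in Hh; [|lra].
  unfold Rdiv in Hh. rewrite Rmult_assoc Rinv_l in Hh; lra. }
have Hn : vnorm (vscale h y) < δ by rewrite vnorm_scale; fold V; nra.
have Hr := Hb _ Hn. rewrite vnorm_scale dot_scale_r in Hr. fold V in Hr.
rewrite Rplus_0_l vadd_vscale_0.
replace ((F (vadd x0 (vscale h y)) - F x0) / h - dot g y)
  with ((F (vadd x0 (vscale h y)) - F x0 - h * dot g y) / h) by (field; exact Hh0).
unfold Rdiv. rewrite Rabs_mult Rabs_inv.
apply (Rmult_lt_reg_r (Rabs h)); [exact Hha|].
rewrite Rmult_assoc Rinv_l; [|lra]. nra.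
Qed.

Lemma first_order_condition p r s (v : Fin.t r -> vec p) d (w : Fin.t s -> vec p) e
  f (grad : vec p -> vec p) (Hgrad : forall x, frechet_grad f (grad x) x) rho xs y :
  is_minimizer (Epen f v d w e rho) xs -> in_null_UZ v d w e xs y ->
  dot (grad xs) y + rho * dot (uZbar v d w e xs) y = 0.
Proof.
intros Hmin Hy.
set U := rho * dot (uZbar v d w e xs) y.
destruct (penalty_affine_near _ _ _ v d w e f rho xs y Hy) as [δ [Hδ Hlin]].
set phi := fun t => f (vadd xs (vscale t y)) + U * t.
have Hder : derivable_pt_lim phi 0 (dot (grad xs) y + U * 1).
{ apply (derivable_pt_lim_plus (fun t => f (vadd xs (vscale t y))) (fun t => U * t)).
  - exact (frechet_line_derivative _ _ _ _ _ (Hgrad xs)).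
  - apply (derivable_pt_lim_scal id U 0 1), derivable_pt_lim_id. }
rewrite -(Rmult_1_r U).
rewrite -(derive_pt_eq_0 phi 0 _ (exist _ _ Hder) Hder).
apply (deriv_minimum phi (- δ) δ 0); [lra|lra|].
intros t Ht1 Ht2. unfold phi. rewrite vadd_vscale_0 Rmult_0_r Rplus_0_r.
have := Hmin (vadd xs (vscale t y)). rewrite Hlin; [|apply Rabs_def1; lra].
fold U. lra.
Qed.

Lemma uZbar_same_index p r s (v : Fin.t r -> vec p) d (w : Fin.t s -> vec p) e x0 x1 :
  same_index_sets v d w e x0 x1 -> uZbar v d w e x1 = uZbar v d w e x0.
Proof.
intros [Hg Hh]. apply functional_extensionality => l. unfold uZbar. f_equal.
- apply fsum_ext => i. f_equal. destruct (Hg i) as [A [B C]]. unfold sgnE.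
  destruct (Rlt_dec (gfun v d i x1) 0), (Rlt_dec (gfun v d i x0) 0); try tauto.
  destruct (Rlt_dec 0 (gfun v d i x1)), (Rlt_dec 0 (gfun v d i x0)); tauto.
- apply fsum_ext => j. f_equal. destruct (Hh j) as [_ [_ C]]. unfold posI.
  destruct (Rlt_dec 0 (hfun w e j x1)), (Rlt_dec 0 (hfun w e j x0)); tauto.
Qed.

Lemma in_null_same_index p r s (v : Fin.t r -> vec p) d (w : Fin.t s -> vec p) e x0 x1 y :
  same_index_sets v d w e x0 x1 -> in_null_UZ v d w e x0 y -> in_null_UZ v d w e x1 y.
Proof.
intros [Hg Hh] [Hy1 Hy2]. split.
- intros i Hi. apply Hy1, (proj2 (proj1 (proj2 (Hg i)))), Hi.
- intros j Hj. apply Hy2, (proj2 (proj1 (proj2 (Hh j)))), Hj.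
Qed.

(* Points with the same index sets lie on the same active constraints, so
   their difference is in the null space of U_Z. *)
Lemma diff_in_null p r s (v : Fin.t r -> vec p) d (w : Fin.t s -> vec p) e x0 x1 :
  same_index_sets v d w e x0 x1 -> in_null_UZ v d w e x0 (vsub x1 x0).
Proof.
intros [Hg Hh]. split.
- intros i Hi. have := proj1 (proj1 (proj2 (Hg i))) Hi. unfold gfun in *.
  rewrite dot_sub_r. lra.
- intros j Hj. have := proj1 (proj1 (proj2 (Hh j))) Hj. unfold hfun in *.
  rewrite dot_sub_r. lra.
Qed.

Lemma gradient_remainder p (grad : vec p -> vec p) (hess : vec p -> Fin.t p -> vec p) x0 :
  (forall i, frechet_grad (fun y => grad y i) (hess x0 i) x0) ->
  forall eps, 0 < eps -> exists δ, 0 < δ /\ forall y, n1 (vsub y x0) < δ ->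
    n1 (vsub (vsub (grad y) (grad x0)) (mat_vec (hess x0) (vsub y x0)))
      <= INR p * eps * n1 (vsub y x0).
Proof.
intros Hhess eps Heps.
destruct (fin_delta (vec p) vnorm p (fun i D =>
    Rabs (grad (vadd x0 D) i - grad x0 i - dot (hess x0 i) D) <= eps * vnorm D))
  as [δ [Hδ Hb]].
{ intros i. exact (Hhess i eps Heps). }
exists δ. split; [exact Hδ|]. intros y Hy.
have Hyv : vnorm (vsub y x0) < δ by eapply Rle_lt_trans; [apply vnorm_le_n1|exact Hy].
have Ey : vadd x0 (vsub y x0) = y.
{ apply functional_extensionality => l. unfold vadd, vsub. ring. }
rewrite Rmult_assoc -fsum_const. apply fsum_le => i.
change (Rabs (grad y i - grad x0 i - dot (hess x0 i) (vsub y x0))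
  <= eps * n1 (vsub y x0)).
have := Hb _ Hyv i. rewrite Ey. have := vnorm_le_n1 _ (vsub y x0). nra.
Qed.

Lemma absorb_error n (D w : vec n) h κ : 0 <= κ <= 1 / 2 ->
  n1 (vadd D (vscale h w)) <= κ * n1 D ->
  n1 (vadd D (vscale h w)) <= 2 * κ * Rabs h * n1 w.
Proof.
intros Hκ HE.
have := n1_le_shift _ D w h. have := n1_nonneg _ (vadd D (vscale h w)).
have := n1_nonneg _ w. have := Rabs_pos h. nra.
Qed.

Lemma tolerance_choice C W eta : 0 <= C -> 0 <= W -> 0 < eta ->
  exists κ eps, 0 < eps /\ 0 <= κ <= 1 / 2 /\ 2 * κ * W <= eta /\ C * eps <= κ.
Proof.
intros HC HW Heta.
set κ := Rmin (1 / 2) (eta / (2 * (W + 1))).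
have Hκpos : 0 < κ by apply Rmin_pos; [lra|apply Rdiv_lt_0_compat; lra].
have Hκ2 : κ * (2 * (W + 1)) <= eta.
{ have Hr : κ <= eta / (2 * (W + 1)) by apply Rmin_r.
  apply (Rmult_le_compat_r (2 * (W + 1))) in Hr; [|lra].
  unfold Rdiv in Hr. rewrite Rmult_assoc Rinv_l in Hr; lra. }
exists κ, (κ / (C + 1)). repeat split.
- apply Rdiv_lt_0_compat; lra.
- lra.
- apply Rmin_l.
- nra.
- have Ee : κ / (C + 1) * (C + 1) = κ by field; lra.
  have : 0 < κ / (C + 1) by apply Rdiv_lt_0_compat; lra. nra.
Qed.

Section Expansion.
Variables (p r s k : nat) (v : Fin.t r -> vec p) (d : vec r) (w : Fin.t s -> vec p) (e : vec s).
Variables (f : vec p -> R) (grad : vec p -> vec p) (hess : vec p -> Fin.t p -> vec p).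
Hypothesis Hgrad : forall x, frechet_grad f (grad x) x.
Hypothesis Hhess : forall x i, frechet_grad (fun y => grad y i) (hess x i) x.
Variables (I : R -> Prop) (x : R -> vec p) (Y : Fin.t k -> vec p) (rho0 : R).
Hypothesis HIopen : is_open_interval I.
Hypothesis Hr0 : I rho0.
Hypothesis Hmin : forall rho, I rho -> is_minimizer (Epen f v d w e rho) (x rho).
Hypothesis Hcont : forall l, continuity_pt (fun t => x t l) rho0.
Hypothesis Hidx : forall rho, I rho -> same_index_sets v d w e (x rho0) (x rho).
Hypothesis HY : null_basis v d w e (x rho0) Y.

Variable N : Fin.t k -> vec k.
Hypothesis HNM : forall z c, mat_vec N (mat_vec (reduced_hess (hess (x rho0)) Y) z) c = z c.

Let x0 := x rho0.
Let M := reduced_hess (hess x0) Y.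
Let b := mat_tr_vec Y (uZbar v d w e x0).
Let wv := mat_col_comb Y (mat_vec N b).

Lemma foc_difference h : I (rho0 + h) ->
  forall c, mat_tr_vec Y (vsub (grad (x (rho0 + h))) (grad x0)) c = - h * b c.
Proof.
intros HIr c.
have Hs := Hidx _ HIr.
have F1 := first_order_condition _ _ _ v d w e f grad Hgrad _ _ (Y c) (Hmin _ HIr)
             (in_null_same_index _ _ _ v d w e _ _ _ Hs (proj1 HY c)).
have F0 := first_order_condition _ _ _ v d w e f grad Hgrad _ _ (Y c) (Hmin _ Hr0)
             (proj1 HY c).
rewrite (uZbar_same_index _ _ _ v d w e _ _ Hs) in F1.
unfold b, x0, mat_tr_vec. rewrite dot_sub_r !(dot_comm _ (Y c)). nra.
Qed.

(* Operator bound for the linear map r |-> Y N Y^t r. *)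
Let Cresp := opnorm1 (fun l c => Y c l) * opnorm1 N * opnorm1 Y.

Lemma Cresp_nonneg : 0 <= Cresp.
Proof. unfold Cresp. repeat apply Rmult_le_pos; apply opnorm1_nonneg. Qed.

Lemma linear_response h a rr :
  (forall c, mat_vec M a c = - h * b c - mat_tr_vec Y rr c) ->
  n1 (vadd (mat_col_comb Y a) (vscale h wv)) <= Cresp * n1 rr.
Proof.
intros HMa.
set t := mat_tr_vec Y rr. set q := mat_vec N t.
have Ha : forall c, a c = - h * mat_vec N b c - q c.
{ intros c. rewrite -(HNM a c).
  transitivity (dot (N c) (fun c' => - h * b c' - t c')); [|apply dot_affine_r].
  apply fsum_ext => c'. by rewrite HMa. }
have Hsum : n1 (vadd (mat_col_comb Y a) (vscale h wv)) = n1 (mat_col_comb Y q).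
{ apply fsum_ext => l. unfold vadd, vscale, wv. rewrite !mat_col_comb_rows.
  have Eq : dot (fun c => Y c l) a
            = dot (fun c => Y c l) (fun c => - h * mat_vec N b c - q c).
  { apply fsum_ext => c. by rewrite Ha. }
  rewrite Eq dot_affine_r -Rabs_Ropp. f_equal. lra. }
rewrite Hsum. eapply Rle_trans; [apply n1_mat_col_comb_le|].
unfold Cresp. rewrite !Rmult_assoc. apply Rmult_le_compat_l; [apply opnorm1_nonneg|].
eapply Rle_trans; [apply (n1_rows_le _ _ N t)|].
apply Rmult_le_compat_l; [apply opnorm1_nonneg|]. apply (n1_rows_le _ _ Y rr).
Qed.

Lemma first_order_expansion : forall eta, 0 < eta ->
  exists δ, 0 < δ /\ forall h, Rabs h < δ ->
    n1 (vadd (vsub (x (rho0 + h)) x0) (vscale h wv)) <= eta * Rabs h.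
Proof.
intros eta Heta.
destruct (tolerance_choice (Cresp * INR p) (n1 wv) eta) as [κ [eps [Heps [Hκ [HκW HCeps]]]]].
{ have := Cresp_nonneg. have := pos_INR p. nra. }
{ apply n1_nonneg. }
{ exact Heta. }
destruct (gradient_remainder _ grad hess x0 (Hhess x0) eps Heps) as [dF [HdF Hrem]].
destruct (path_n1_continuity _ x rho0 Hcont dF HdF) as [dc [Hdc Hc]].
destruct (proj2 HIopen rho0 Hr0) as [dI [HdI HI]].
exists (Rmin dI dc). split; [apply Rmin_pos; lra|]. intros h Hh.
have HIr : I (rho0 + h).
{ apply HI. replace (rho0 + h - rho0) with h by ring.
  eapply Rlt_le_trans; [exact Hh|apply Rmin_l]. }
have Hdx : n1 (vsub (x (rho0 + h)) x0) < dF.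
{ apply Hc. eapply Rlt_le_trans; [exact Hh|apply Rmin_r]. }
set Dx := vsub (x (rho0 + h)) x0.
destruct (proj2 (proj2 HY) Dx (diff_in_null _ _ _ v d w e _ _ (Hidx _ HIr))) as [a Ha].
have EDx : mat_col_comb Y a = Dx by apply functional_extensionality => l; rewrite Ha.
set rr := vsub (vsub (grad (x (rho0 + h))) (grad x0)) (mat_vec (hess x0) Dx).
have Hrr : n1 rr <= INR p * eps * n1 Dx by apply Hrem, Hdx.
have HMa : forall c, mat_vec M a c = - h * b c - mat_tr_vec Y rr c.
{ intros c. unfold M. rewrite reduced_hess_mul EDx -(foc_difference h HIr c).
  unfold rr, mat_tr_vec. rewrite !dot_sub_r. lra. }
have Hresp := linear_response h a rr HMa. rewrite EDx in Hresp.
apply Rle_trans with (2 * κ * Rabs h * n1 wv); [|have := Rabs_pos h; nra].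
apply absorb_error; [lra|].
eapply Rle_trans; [exact Hresp|].
apply Rle_trans with (Cresp * (INR p * eps * n1 Dx)).
- apply Rmult_le_compat_l; [apply Cresp_nonneg|exact Hrr].
- replace (Cresp * (INR p * eps * n1 Dx)) with (Cresp * INR p * eps * n1 Dx) by lra.
  apply Rmult_le_compat_r; [apply n1_nonneg|exact HCeps].
Qed.

End Expansion.

Theorem proposition4
  (p r s : nat)
  (v : Fin.t r -> vec p) (d : vec r) (w : Fin.t s -> vec p) (e : vec s)
  (f : vec p -> R) (grad : vec p -> vec p) (hess : vec p -> Fin.t p -> vec p)
  (Hconv : convex f)
  (HC2 : C2_with f grad hess)
  (I : R -> Prop)
  (HIopen : is_open_interval I)
  (HIpos : forall rho, I rho -> 0 < rho)
  (x : R -> vec p)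
  (Hmin : forall rho, I rho -> unique_minimizer (Epen f v d w e rho) (x rho))
  (Hcont : forall rho, I rho -> forall l, continuity_pt (fun t => x t l) rho)
  (Hidx : forall rho1 rho2, I rho1 -> I rho2 ->
            same_index_sets v d w e (x rho1) (x rho2))
  (Hindep : forall rho, I rho -> UZ_rows_indep v d w e (x rho))
  (k : nat) (Y : Fin.t k -> vec p)
  (HY : forall rho, I rho -> null_basis v d w e (x rho) Y)
  (Hnonsing : forall rho, I rho -> nonsingular (reduced_hess (hess (x rho)) Y)) :
  forall rho, I rho ->
    exists dx : vec p,
      (forall l, derivable_pt_lim (fun t => x t l) rho (dx l)) /\
      exists z : vec k,
        (forall c, mat_vec (reduced_hess (hess (x rho)) Y) z c
                   = mat_tr_vec Y (uZbar v d w e (x rho)) c) /\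
        (forall l, dx l = - mat_col_comb Y z l).
Proof.
intros rho0 Hr0.
destruct HC2 as [Hgrad [Hhess _]].
destruct (FinMatrix.mat_inv _ _ (Hnonsing rho0 Hr0)) as [N [HMN HNM]].
set z := mat_vec N (mat_tr_vec Y (uZbar v d w e (x rho0))).
exists (fun l => - mat_col_comb Y z l). split.
- apply derivable_of_expansion.
  apply (first_order_expansion p r s k v d w e f grad hess Hgrad Hhess I x Y rho0
           HIopen Hr0 (fun rho Hr => proj1 (Hmin rho Hr)) (Hcont rho0 Hr0)
           (fun rho Hr => Hidx rho0 rho Hr0 Hr) (HY rho0 Hr0) N HNM).
- exists z. split; [apply HMN|reflexivity].
Qed.
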